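(* Let $\alpha$ be a nonzero real number and let $\gamma\colon I\to\mathbb S^2$ be a properly immersed $\alpha$-stationary curve. Suppose that the north pole $N$ is not an adherent point of $\gamma(I)$ and that $\gamma(I)\cap\mathbb S^2_+\neq\emptyset$, where $\mathbb S^2_+=\mathbb S^2\cap\{z>0\}$. Then $\alpha>-1$.
   Context: $\mathbb S^2\subset\mathbb R^3$ is the unit sphere with the Euclidean inner product $\langle,\rangle$. It is parametrized by $\Psi(u,v)=(\sin u\cos v,\sin u\sin v,\cos u)$, and $N=(0,0,1)$. The spherical distance from $\Psi(u,v)$ to $N$ is $u\in[0,\pi]$. For a curve $\gamma(t)=\Psi(u(t),v(t))$ avoiding $N$, the energy is $$E_\alpha[\gamma]=\int_\gamma\mathsf d^\alpha ds=\int u^\alpha\sqrt{u'^2+\sin^2(u)v'^2}\,dt,$$ where $\mathsf d$ is the distance to $N$. The curve is $\alpha$-stationary if it is a critical point of $E_\alpha$ (Euler–Lagrange equations). Equivalently, $\kappa=\alpha\langle\mathbf n,\xi\rangle/\mathsf d$, with $\mathbf n=(\gamma'\times\gamma)/|\gamma'|$, $\kappa=\langle\gamma'',\mathbf n\rangle/|\gamma'|^2$, and $\xi=\Psi_u$. Throughout the paper, $\alpha\ne0$. *)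

From Stdlib Require Import Reals.
From Coquelicot Require Import Coquelicot.
Open Scope R_scope.

Definition vec3 : Type := (R * R * R)%type.

Definition dot3 (a b : vec3) : R :=
  let '(a1, a2, a3) := a in let '(b1, b2, b3) := b in a1 * b1 + a2 * b2 + a3 * b3.

Definition cross3 (a b : vec3) : vec3 :=
  let '(a1, a2, a3) := a in let '(b1, b2, b3) := b in
  (a2 * b3 - a3 * b2, a3 * b1 - a1 * b3, a1 * b2 - a2 * b1).

Definition scal3 (c : R) (a : vec3) : vec3 :=
  let '(a1, a2, a3) := a in (c * a1, c * a2, c * a3).

Definition sub3 (a b : vec3) : vec3 :=
  let '(a1, a2, a3) := a in let '(b1, b2, b3) := b in (a1 - b1, a2 - b2, a3 - b3).

Definition norm3 (a : vec3) : R := sqrt (dot3 a a).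

Definition zcoord (a : vec3) : R := let '(_, _, a3) := a in a3.

Definition NP : vec3 := (0, 0, 1).
Definition SP : vec3 := (0, 0, -1).

Definition distN (p : vec3) : R := acos (dot3 p NP).

(** xi = Psi_u at p = Psi(u,v), written intrinsically:
    Psi_u = (cos u cos v, cos u sin v, - sin u) = (<p,N> p - N) / sin u,
    defined for p <> N, -N (where sin u <> 0). *)
Definition xi (p : vec3) : vec3 :=
  scal3 (/ sin (distN p)) (sub3 (scal3 (dot3 p NP) p) NP).

Definition curve_derivs (g g1 g2 : R -> vec3) : Prop :=
  forall t, is_derive g t (g1 t) /\ is_derive g1 t (g2 t).

Definition normal_n (g g1 : R -> vec3) (t : R) : vec3 :=
  scal3 (/ norm3 (g1 t)) (cross3 (g1 t) (g t)).

Definition kappa (g g1 g2 : R -> vec3) (t : R) : R :=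
  dot3 (g2 t) (normal_n g g1 t) / (norm3 (g1 t)) ^ 2.

(** alpha-stationary: kappa = alpha <n, xi> / d at every point (where xi is
    defined, i.e. away from the poles; the curve is assumed to avoid N). *)
Definition alpha_stationary (alpha : R) (g g1 g2 : R -> vec3) : Prop :=
  forall t, g t <> NP -> g t <> SP ->
    kappa g g1 g2 t = alpha * dot3 (normal_n g g1 t) (xi (g t)) / distN (g t).

(** A properly (= completely) immersed curve in S^2: defined on all of R,
    parametrized by arc length (|gamma'| = 1), lying on the unit sphere. *)
Definition complete_unit_speed_spherical_curve (g g1 g2 : R -> vec3) : Prop :=
  curve_derivs g g1 g2 /\
  (forall t, norm3 (g t) = 1) /\
  (forall t, norm3 (g1 t) = 1).

Definition N_not_adherent (g : R -> vec3) : Prop :=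
  exists eps, 0 < eps /\ forall t, eps <= norm3 (sub3 (g t) NP).

(* Let u = d o gamma be the distance to N along the curve and z = cos u its
   height.  A computation with the frame (gamma, gamma', gamma x gamma') turns the
   stationarity equation into
     u'' = l^2 (alpha sin u + u cos u) / (u sin u),   l = <n, xi>,
   so for alpha <= -1, since u cos u < sin u, u is concave wherever u < pi/2, and
   strictly so at its critical points.  But a function on the whole line that is
   bounded below (here by 0) cannot be concave below a level c and go below it:
   at a point with u' < 0 the sublevel set traps u for all later times, where it
   then decreases at least linearly; time reversal excludes u' > 0; so u' = 0
   on the sublevel set, contradicting u'' < 0 at critical points.  Hence gamma
   never enters the upper hemisphere. *)

From Pilot Require Import Defs.
From Stdlib Require Import Reals Lra Psatz Classical.
From Coquelicot Require Import Coquelicot.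
Open Scope R_scope.

Lemma continuity_pt_of_is_derive (f : R -> R) x l :
  is_derive f x l -> continuity_pt f x.
Proof.
  intros Hf. apply is_derive_Reals in Hf.
  apply derivable_continuous_pt. exists l. exact Hf.
Qed.

Lemma nonincreasing_of_derive_nonpos (f df : R -> R) a b : a <= b ->
  (forall x, a <= x <= b -> continuity_pt f x) ->
  (forall x, a < x < b -> is_derive f x (df x)) ->
  (forall x, a < x < b -> df x <= 0) ->
  f b <= f a.
Proof.
  intros Hab Hcont Hder Hsign.
  destruct (Req_dec a b) as [<- | Hne]; [lra |].
  assert (Hder' : forall x, a < x < b -> derivable_pt f x).
  { intros x Hx. exists (df x). apply is_derive_Reals, Hder, Hx. }
  assert (Hid : forall x, a < x < b -> derivable_pt id x).
  { intros x _. apply derivable_pt_id. }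
  destruct (MVT f id a b Hder' Hid) as [c [Hc Hmvt]];
    [lra | exact Hcont | intros x _; apply derivable_continuous_pt, derivable_pt_id |].
  rewrite (derive_pt_eq_0 f c (df c) (Hder' c Hc)) in Hmvt
    by apply is_derive_Reals, Hder, Hc.
  rewrite (derive_pt_eq_0 id c 1 (Hid c Hc)) in Hmvt by apply derivable_pt_lim_id.
  unfold id in Hmvt. specialize (Hsign c Hc). nra.
Qed.

(* Real induction: continuity at the supremum of the good times lets them go further. *)
Lemma sublevel_real_induction (f : R -> R) (a c : R) :
  (forall t, continuity_pt f t) ->
  (forall s, a <= s -> (forall r, a <= r < s -> f r < c) -> f s < c) ->
  forall s, a <= s -> f s < c.
Proof.
  intros Hcont Hstep b Hab. apply Rnot_le_lt. intros Hb.
  set (E := fun s => a <= s <= b /\ forall r, a <= r < s -> f r < c).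
  assert (HEa : E a) by (split; [lra | intros r Hr; lra]).
  destruct (completeness E) as [m [Hub Hlub]].
  { exists b. intros s [Hs _]. lra. }
  { exists a. exact HEa. }
  assert (Ham : a <= m) by exact (Hub a HEa).
  assert (Hmb : m <= b) by (apply Hlub; intros s [Hs _]; lra).
  assert (Hbelow : forall r, a <= r < m -> f r < c).
  { intros r Hr. apply NNPP. intros Hfr.
    assert (m <= r); [| lra].
    apply Hlub. intros e [He Hfe]. apply Rnot_lt_le. intros Hre.
    apply Hfr, Hfe. lra. }
  assert (Hfm : f m < c) by (apply Hstep; assumption).
  assert (Hmb' : m < b) by (destruct (Req_dec m b) as [-> |]; lra).
  destruct (Hcont m (c - f m)) as [d [Hd Hnear]]; [lra |].
  set (m' := Rmin (m + d / 2) b).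
  assert (Hm' : E m').
  { split; [split; [unfold m'; apply Rmin_case; lra | apply Rmin_r] |].
    intros r Hr. destruct (Rlt_le_dec r m) as [Hrm | Hrm]; [apply Hbelow; lra |].
    destruct (Req_dec r m) as [-> | Hrm']; [exact Hfm |].
    assert (Hm'd : m' <= m + d / 2) by apply Rmin_l.
    assert (Hclose : Rabs (f r - f m) < c - f m).
    { apply Hnear. repeat split; [intros Heq; apply Hrm'; auto |].
      simpl. unfold R_dist. rewrite Rabs_right; lra. }
    apply Rabs_def2 in Hclose. lra. }
  assert (m < m') by (unfold m'; apply Rmin_case; lra).
  specialize (Hub m' Hm'). lra.
Qed.

Lemma exists_nonzero_near_of_is_derive (v : R -> R) t0 l :
  is_derive v t0 l -> l <> 0 ->
  forall d, 0 < d -> exists t, Rabs (t - t0) < d /\ v t <> 0.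
Proof.
  intros Hv Hl d Hd. apply NNPP. intros Hnone. apply Hl.
  assert (Hzero : is_derive (fun _ => 0) t0 l).
  { apply (is_derive_ext_loc v); [| exact Hv].
    exists (mkposreal d Hd). intros t Ht. apply NNPP. intros Hvt.
    apply Hnone. exists t. split; [exact Ht | exact Hvt]. }
  apply is_derive_unique in Hzero. rewrite Derive_const in Hzero. auto.
Qed.

Definition concave_on_sublevel (u v w : R -> R) (c : R) : Prop :=
  forall t, u t < c -> is_derive u t (v t) /\ is_derive v t (w t) /\ w t <= 0.

Lemma concave_on_sublevel_derive_nonneg (u v w : R -> R) (c lb : R) :
  (forall t, continuity_pt u t) -> (forall t, lb <= u t) ->
  concave_on_sublevel u v w c ->
  forall t1, u t1 < c -> 0 <= v t1.
Proof.
  intros Hcont Hlb Hconc t1 Ht1. apply Rnot_lt_le. intros Hv1.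
  assert (Hslope : forall s, t1 <= s -> (forall r, t1 <= r < s -> u r < c) ->
            u s - v t1 * s <= u t1 - v t1 * t1).
  { intros s Hs Hsub.
    apply (nonincreasing_of_derive_nonpos (fun r => u r - v t1 * r) (fun r => v r - v t1));
      [exact Hs | | |].
    - intros x _. apply continuity_pt_minus; [apply Hcont |].
      apply continuity_pt_mult; [apply continuity_pt_const; intros ? ?; reflexivity |].
      apply derivable_continuous_pt, derivable_pt_id.
    - intros x Hx. apply (is_derive_minus u (fun r => v t1 * r)).
      + apply Hconc, Hsub. lra.
      + auto_derive; [exact I | ring].
    - intros x Hx. enough (v x <= v t1) by lra.
      apply (nonincreasing_of_derive_nonpos v w); [lra | | |].
      + intros y Hy. apply (continuity_pt_of_is_derive v y (w y)), Hconc, Hsub. lra.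
      + intros y Hy. apply Hconc, Hsub. lra.
      + intros y Hy. apply Hconc, Hsub. lra. }
  assert (Htrapped : forall s, t1 <= s -> u s < c).
  { apply sublevel_real_induction; [exact Hcont |].
    intros s Hs Hsub. specialize (Hslope s Hs Hsub). nra. }
  set (T := t1 + (u t1 - lb + 1) / - v t1).
  assert (HT : t1 <= T).
  { unfold T. assert (0 <= (u t1 - lb + 1) / - v t1); [| lra].
    apply Rdiv_le_0_compat; [specialize (Hlb t1) |]; lra. }
  specialize (Hslope T HT (fun r Hr => Htrapped r (proj1 Hr))).
  assert (v t1 * (T - t1) = - (u t1 - lb + 1)) by (unfold T; field; lra).
  specialize (Hlb T). nra.
Qed.

Lemma concave_on_sublevel_opp (u v w : R -> R) (c : R) :
  concave_on_sublevel u v w c ->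
  concave_on_sublevel (fun t => u (- t)) (fun t => - v (- t)) (fun t => w (- t)) c.
Proof.
  intros Hconc t Ht. destruct (Hconc (- t) Ht) as [Hu [Hv Hw]].
  assert (Hopp : is_derive (fun s : R => - s) t (-1)) by (auto_derive; [exact I | ring]).
  split; [| split; [| exact Hw]].
  - replace (- v (- t)) with (scal (-1) (v (- t)))
      by (unfold scal; simpl; unfold mult; simpl; ring).
    exact (is_derive_comp u _ t _ _ Hu Hopp).
  - replace (w (- t)) with (opp (scal (-1) (w (- t))))
      by (unfold opp, scal; simpl; unfold mult; simpl; ring).
    apply (is_derive_opp (fun s => v (- s))).
    exact (is_derive_comp v _ t _ _ Hv Hopp).
Qed.

Lemma concave_on_sublevel_derive_eq0 (u v w : R -> R) (c lb : R) :
  (forall t, continuity_pt u t) -> (forall t, lb <= u t) ->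
  concave_on_sublevel u v w c ->
  forall t, u t < c -> v t = 0.
Proof.
  intros Hcont Hlb Hconc t Ht.
  assert (Hge := concave_on_sublevel_derive_nonneg u v w c lb Hcont Hlb Hconc t Ht).
  assert (Hle : 0 <= - v (- - t)).
  { apply (concave_on_sublevel_derive_nonneg (fun s => u (- s)) (fun s => - v (- s))
             (fun s => w (- s)) c lb); [| | apply concave_on_sublevel_opp, Hconc |].
    - intros s. apply (continuity_pt_comp (fun s => - s) u).
      + apply continuity_pt_opp, derivable_continuous_pt, derivable_pt_id.
      + apply Hcont.
    - intros s. apply Hlb.
    - rewrite Ropp_involutive. exact Ht. }
  rewrite Ropp_involutive in Hle. lra.
Qed.

Lemma ge_of_concave_on_sublevel (u v w : R -> R) (c lb : R) :
  (forall t, continuity_pt u t) -> (forall t, lb <= u t) ->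
  concave_on_sublevel u v w c ->
  (forall t, u t < c -> v t = 0 -> w t < 0) ->
  forall t, c <= u t.
Proof.
  intros Hcont Hlb Hconc Hstrict t0. apply Rnot_lt_le. intros Ht0.
  assert (Hcrit := concave_on_sublevel_derive_eq0 u v w c lb Hcont Hlb Hconc).
  assert (Hw0 : w t0 <> 0) by (specialize (Hstrict t0 Ht0 (Hcrit t0 Ht0)); lra).
  destruct (Hcont t0 (c - u t0)) as [d [Hd Hnear]]; [lra |].
  destruct (exists_nonzero_near_of_is_derive v t0 (w t0) (proj1 (proj2 (Hconc t0 Ht0)))
              Hw0 d Hd)
    as [t1 [Ht1 Hv1]].
  apply Hv1, Hcrit.
  destruct (Req_dec t1 t0) as [-> | Hne]; [exact Ht0 |].
  assert (Hclose : Rabs (u t1 - u t0) < c - u t0).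
  { apply Hnear. repeat split; [intros Heq; apply Hne; auto | exact Ht1]. }
  apply Rabs_def2 in Hclose. lra.
Qed.

Lemma continuity_pt_acos x : continuity_pt acos x.
Proof.
  assert (Hpos : forall y, 0 < y -> continuity_pt acos y).
  { intros y Hy.
    apply (continuity_pt_ext_loc (fun r => atan (sqrt (1 - r²) / r)) acos y).
    - exists (mkposreal y Hy). intros r Hr. simpl in Hr.
      unfold ball in Hr; simpl in Hr.
      unfold AbsRing_ball, abs, minus, plus, opp in Hr; simpl in Hr.
      apply Rabs_def2 in Hr. symmetry. apply acos_atan. lra.
    - apply continuity_pt_filterlim, (continuous_atan_comp (fun r => sqrt (1 - r²) / r)).
      apply (continuous_mult (fun r => sqrt (1 - r²)) (fun r => / r)).
      + apply continuous_sqrt_comp.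
        apply (ex_derive_continuous (K := R_AbsRing) (V := R_NormedModule) (fun r => 1 - r²)).
        auto_derive. exact I.
      + apply continuous_Rinv_comp; [apply continuous_id | lra]. }
  destruct (Rtotal_order x 0) as [Hneg | [-> | Hx]].
  - apply (continuity_pt_ext (fun r => PI - acos (- r)) acos x).
    { intros r. rewrite acos_opp. ring. }
    apply continuity_pt_minus; [apply continuity_pt_const; intros ? ?; reflexivity |].
    apply (continuity_pt_comp (fun r => - r) acos).
    + apply continuity_pt_opp, derivable_continuous_pt, derivable_pt_id.
    + apply Hpos. lra.
  - apply derivable_continuous_pt, derivable_pt_acos. lra.
  - apply Hpos, Hx.
Qed.

Lemma is_derive_acos_comp (z : R -> R) t l :
  is_derive z t l -> -1 < z t < 1 ->
  is_derive (fun s => acos (z s)) t (- l / sqrt (1 - (z t)²)).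
Proof.
  intros Hz Hbnd.
  assert (Hacos : is_derive acos (z t) (-1 / sqrt (1 - (z t)²))).
  { apply is_derive_Reals, (derive_pt_eq_1 _ _ _ (derivable_pt_acos _ Hbnd)).
    apply derive_pt_acos. }
  assert (Hs : 0 < sqrt (1 - (z t)²)) by (apply sqrt_lt_R0; unfold Rsqr; nra).
  replace (- l / sqrt (1 - (z t)²)) with (scal l (-1 / sqrt (1 - (z t)²)))
    by (unfold scal; simpl; unfold mult; simpl; field; lra).
  exact (is_derive_comp acos z t _ _ Hacos Hz).
Qed.

Lemma is_derive_acos_rate (z z1 : R -> R) t l1 :
  is_derive z t (z1 t) -> is_derive z1 t l1 -> -1 < z t < 1 ->
  is_derive (fun s => - z1 s / sqrt (1 - (z s)²)) t
    (- (l1 * (1 - (z t)²) + z t * (z1 t)²) / sqrt (1 - (z t)²) ^ 3).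
Proof.
  intros Hz Hz1 Hbnd.
  assert (Hpos : 0 < 1 - (z t)²) by (unfold Rsqr; nra).
  assert (Hss : sqrt (1 - (z t)²) * sqrt (1 - (z t)²) = 1 - (z t)²)
    by (apply sqrt_sqrt; lra).
  assert (Hs : 0 < sqrt (1 - (z t)²)) by (apply sqrt_lt_R0; lra).
  auto_derive.
  - replace (1 + - (z t)²) with (1 - (z t)²) by ring.
    repeat split; try (eexists; eassumption); lra.
  - erewrite !(is_derive_unique _ t) by eassumption.
    replace (1 + - (z t)²) with (1 - (z t)²) by ring.
    set (s := sqrt (1 - (z t)²)) in *.
    rewrite <- Hss. unfold Rsqr. field. lra.
Qed.

Lemma acos_lt_PI2 x : -1 <= x <= 1 -> (acos x < PI / 2 <-> 0 < x).
Proof.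
  intros Hx. pose proof (acos_bound x) as Hb. pose proof PI_RGT_0 as Hpi.
  rewrite <- (cos_acos x Hx) at 2. split; intros H.
  - apply cos_gt_0; lra.
  - apply Rnot_le_lt. intros Hge. assert (cos (acos x) <= 0) by (apply cos_le_0; lra). lra.
Qed.

Lemma mul_cos_lt_sin u : 0 < u < PI -> u * cos u < sin u.
Proof.
  intros Hu.
  destruct (MVT_cor2 (fun x => sin x - x * cos x) (fun x => x * sin x) 0 u)
    as [c [Hmvt Hc]]; [lra | |].
  - intros c _. apply is_derive_Reals. auto_derive; [exact I | ring].
  - rewrite sin_0, cos_0 in Hmvt.
    assert (0 < sin c) by (apply sin_gt_0; lra).
    assert (0 < c * sin c * u) by (repeat apply Rmult_lt_0_compat; lra).
    lra.
Qed.

Lemma dot3C (a b : vec3) : dot3 a b = dot3 b a.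
Proof. destruct a as [[a1 a2] a3], b as [[b1 b2] b3]. simpl. ring. Qed.

Lemma dot3_NP (a : vec3) : dot3 a NP = zcoord a.
Proof. destruct a as [[a1 a2] a3]. simpl. ring. Qed.

Lemma dot3_self_of_norm3 (a : vec3) : norm3 a = 1 -> dot3 a a = 1.
Proof.
  intros Ha. destruct a as [[a1 a2] a3].
  rewrite <- (sqrt_sqrt (dot3 _ _)) by (simpl; nra).
  unfold norm3 in Ha. rewrite Ha. ring.
Qed.

Lemma is_derive_fst {U V : NormedModule R_AbsRing} (f : R -> U * V) t l :
  is_derive f t l -> is_derive (fun s => fst (f s)) t (fst l).
Proof.
  intros Hf. apply (filterdiff_comp' f fst t _ fst Hf).
  apply filterdiff_linear, is_linear_fst.
Qed.

Lemma is_derive_snd {U V : NormedModule R_AbsRing} (f : R -> U * V) t l :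
  is_derive f t l -> is_derive (fun s => snd (f s)) t (snd l).
Proof.
  intros Hf. apply (filterdiff_comp' f snd t _ snd Hf).
  apply filterdiff_linear, is_linear_snd.
Qed.

Lemma is_derive_zcoord (a : R -> vec3) t l :
  is_derive a t l -> is_derive (fun s => zcoord (a s)) t (zcoord l).
Proof.
  intros Ha. apply (is_derive_ext (fun s => snd (a s))).
  - intros s. destruct (a s) as [[? ?] ?]. reflexivity.
  - destruct l as [[? ?] ?]. exact (is_derive_snd a t _ Ha).
Qed.

Lemma is_derive_dot3 (a b : R -> vec3) t la lb :
  is_derive a t la -> is_derive b t lb ->
  is_derive (fun s => dot3 (a s) (b s)) t (dot3 la (b t) + dot3 (a t) lb).
Proof.
  intros Ha Hb.
  set (a1 := fun s => fst (fst (a s))). set (a2 := fun s => snd (fst (a s))).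
  set (a3 := fun s => snd (a s)). set (b1 := fun s => fst (fst (b s))).
  set (b2 := fun s => snd (fst (b s))). set (b3 := fun s => snd (b s)).
  assert (Ha1 : is_derive a1 t (fst (fst la)))
    by exact (is_derive_fst _ _ _ (is_derive_fst _ _ _ Ha)).
  assert (Ha2 : is_derive a2 t (snd (fst la)))
    by exact (is_derive_snd _ _ _ (is_derive_fst _ _ _ Ha)).
  assert (Ha3 : is_derive a3 t (snd la)) by exact (is_derive_snd _ _ _ Ha).
  assert (Hb1 : is_derive b1 t (fst (fst lb)))
    by exact (is_derive_fst _ _ _ (is_derive_fst _ _ _ Hb)).
  assert (Hb2 : is_derive b2 t (snd (fst lb)))
    by exact (is_derive_snd _ _ _ (is_derive_fst _ _ _ Hb)).
  assert (Hb3 : is_derive b3 t (snd lb)) by exact (is_derive_snd _ _ _ Hb).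
  apply (is_derive_ext (fun s => a1 s * b1 s + a2 s * b2 s + a3 s * b3 s)).
  { intros s. unfold a1, a2, a3, b1, b2, b3. destruct (a s) as [[? ?] ?], (b s) as [[? ?] ?].
    reflexivity. }
  auto_derive.
  - repeat split; eexists; eassumption.
  - erewrite !(is_derive_unique _ t) by eassumption.
    unfold a1, a2, a3, b1, b2, b3.
    destruct la as [[? ?] ?], lb as [[? ?] ?], (a t) as [[? ?] ?], (b t) as [[? ?] ?].
    simpl. ring.
Qed.

Lemma is_derive_const_eq0 (f : R -> R) k t l :
  (forall s, f s = k) -> is_derive f t l -> l = 0.
Proof.
  intros Hk Hf. apply (is_derive_ext _ (fun _ => k)) in Hf; [| exact Hk].
  apply is_derive_unique in Hf. rewrite Derive_const in Hf. auto.
Qed.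

(* Cramer's rule in the basis [p, q, p x q], whose Gram determinant is
   [|p|^2 |q|^2 - <p,q>^2]. *)
Lemma dot3_orthonormal_expand (p q r e : vec3) :
  dot3 p p = 1 -> dot3 q q = 1 -> dot3 p q = 0 ->
  dot3 r e = dot3 r p * dot3 p e + dot3 r q * dot3 q e
             + dot3 r (cross3 p q) * dot3 (cross3 p q) e.
Proof.
  intros Hp Hq Hpq.
  assert (Hgram : (dot3 p p * dot3 q q - dot3 p q * dot3 p q) * dot3 r e =
    dot3 r p * (dot3 p e * dot3 q q - dot3 q e * dot3 p q)
    + dot3 r q * (dot3 q e * dot3 p p - dot3 p e * dot3 p q)
    + dot3 r (cross3 p q) * dot3 (cross3 p q) e).
  { destruct p as [[? ?] ?], q as [[? ?] ?], r as [[? ?] ?], e as [[? ?] ?]. simpl. ring. }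
  rewrite Hp, Hq, Hpq in Hgram. lra.
Qed.

Definition spherical_unit_speed_jet (p q r : vec3) : Prop :=
  dot3 p p = 1 /\ dot3 q q = 1 /\ dot3 p q = 0 /\ dot3 q r = 0 /\ dot3 p r = -1.

Lemma spherical_unit_speed_jet_curve (g g1 g2 : R -> vec3) :
  complete_unit_speed_spherical_curve g g1 g2 ->
  forall t, spherical_unit_speed_jet (g t) (g1 t) (g2 t).
Proof.
  intros [Hd [Hg Hg1]].
  assert (Hgg : forall t, dot3 (g t) (g t) = 1) by (intros t; apply dot3_self_of_norm3, Hg).
  assert (Hgg1 : forall t, dot3 (g1 t) (g1 t) = 1) by (intros t; apply dot3_self_of_norm3, Hg1).
  assert (Hgg1' : forall t, dot3 (g t) (g1 t) = 0).
  { intros t. destruct (Hd t) as [Hd1 _].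
    pose proof (is_derive_const_eq0 _ _ _ _ Hgg (is_derive_dot3 g g t _ _ Hd1 Hd1)) as H0.
    rewrite dot3C in H0. lra. }
  intros t. destruct (Hd t) as [Hd1 Hd2].
  repeat split; [apply Hgg | apply Hgg1 | apply Hgg1' | |].
  - pose proof (is_derive_const_eq0 _ _ _ _ Hgg1 (is_derive_dot3 g1 g1 t _ _ Hd2 Hd2)) as H0.
    rewrite (dot3C (g2 t)) in H0. lra.
  - pose proof (is_derive_const_eq0 _ _ _ _ Hgg1' (is_derive_dot3 g g1 t _ _ Hd1 Hd2)) as H0.
    rewrite Hgg1 in H0. lra.
Qed.

Lemma jet_zcoord_unit (p q r : vec3) :
  spherical_unit_speed_jet p q r ->
  (zcoord q)² + (zcoord (cross3 p q))² = 1 - (zcoord p)².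
Proof.
  intros [Hp [Hq [Hpq _]]].
  pose proof (dot3_orthonormal_expand p q NP NP Hp Hq Hpq) as Hexp.
  rewrite (dot3C NP p), (dot3C NP q), (dot3C NP (cross3 p q)), !dot3_NP in Hexp.
  simpl in Hexp. unfold Rsqr. lra.
Qed.

Lemma jet_zcoord_bound (p q r : vec3) :
  spherical_unit_speed_jet p q r -> -1 <= zcoord p <= 1.
Proof.
  intros Hjet. pose proof (jet_zcoord_unit p q r Hjet) as Hsq.
  unfold Rsqr in Hsq. split; nra.
Qed.

(* z-component of the Gauss formula [r = - p + <r, p x q> (p x q)]. *)
Lemma jet_zcoord_accel (p q r : vec3) :
  spherical_unit_speed_jet p q r ->
  zcoord r = - zcoord p + dot3 r (cross3 p q) * zcoord (cross3 p q).
Proof.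
  intros [Hp [Hq [Hpq [Hqr Hpr]]]].
  pose proof (dot3_orthonormal_expand p q r NP Hp Hq Hpq) as Hexp.
  rewrite (dot3C r p), (dot3C r q), Hpr, Hqr, !dot3_NP in Hexp. lra.
Qed.

Lemma dot3_xi (p n : vec3) :
  -1 < zcoord p < 1 -> dot3 n p = 0 ->
  dot3 n (xi p) = - zcoord n / sqrt (1 - (zcoord p)²).
Proof.
  intros Hz Hnp. unfold xi, distN. rewrite dot3_NP, sin_acos by lra.
  assert (Hlin : forall c, dot3 n (scal3 c (sub3 (scal3 (zcoord p) p) NP))
                           = c * (zcoord p * dot3 n p - zcoord n)).
  { intros c. destruct n as [[? ?] ?], p as [[? ?] ?]. simpl. ring. }
  rewrite Hlin, Hnp. unfold Rdiv. ring.
Qed.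

Lemma distN_acos_zcoord (p : vec3) : distN p = acos (zcoord p).
Proof. unfold distN. rewrite dot3_NP. reflexivity. Qed.

Lemma zcoord_lt_1_away_from_NP (p : vec3) eps :
  dot3 p p = 1 -> 0 < eps -> eps <= norm3 (sub3 p NP) -> zcoord p < 1.
Proof.
  intros Hp Heps Hfar. apply Rnot_le_lt. intros Hz.
  assert (Hdist : dot3 (sub3 p NP) (sub3 p NP) = 2 - 2 * zcoord p).
  { destruct p as [[? ?] ?]. simpl in *. nra. }
  unfold norm3 in Hfar. rewrite Hdist, sqrt_neg_0 in Hfar; lra.
Qed.

Lemma continuity_pt_distN (g g1 : R -> vec3) t :
  is_derive g t (g1 t) -> continuity_pt (fun s => distN (g s)) t.
Proof.
  intros Hg.
  apply (continuity_pt_ext (fun s => acos (zcoord (g s)))).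
  { intros s. symmetry. apply distN_acos_zcoord. }
  apply (continuity_pt_comp (fun s => zcoord (g s)) acos); [| apply continuity_pt_acos].
  exact (continuity_pt_of_is_derive _ _ _ (is_derive_zcoord g t _ Hg)).
Qed.

Lemma alpha_stationary_unit_speed (alpha : R) (g g1 g2 : R -> vec3) t :
  alpha_stationary alpha g g1 g2 -> norm3 (g1 t) = 1 ->
  g t <> NP -> g t <> Defs.SP ->
  dot3 (g2 t) (cross3 (g1 t) (g t))
  = alpha * dot3 (cross3 (g1 t) (g t)) (xi (g t)) / distN (g t).
Proof.
  intros Hst Hunit HN HS. specialize (Hst t HN HS).
  unfold kappa, normal_n in Hst. rewrite Hunit, Rinv_1 in Hst.
  replace (scal3 1 (cross3 (g1 t) (g t))) with (cross3 (g1 t) (g t)) in Hst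
    by (destruct (cross3 (g1 t) (g t)) as [[? ?] ?]; simpl; f_equal; [f_equal |]; ring).
  rewrite <- Hst. field.
Qed.

Lemma stationary_height_defect (alpha : R) (p q r : vec3) :
  spherical_unit_speed_jet p q r -> -1 < zcoord p < 1 ->
  dot3 r (cross3 q p) = alpha * dot3 (cross3 q p) (xi p) / distN p ->
  zcoord r * (1 - (zcoord p)²) + zcoord p * (zcoord q)²
  = (zcoord (cross3 p q))²
    * (- alpha * sqrt (1 - (zcoord p)²) - zcoord p * acos (zcoord p)) / acos (zcoord p).
Proof.
  intros Hjet Hz Hstat.
  pose proof (jet_zcoord_unit p q r Hjet) as Hunit.
  pose proof (jet_zcoord_accel p q r Hjet) as Haccel.
  assert (Hqp : cross3 q p = scal3 (-1) (cross3 p q)).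
  { destruct p as [[? ?] ?], q as [[? ?] ?]. simpl. f_equal; [f_equal |]; ring. }
  assert (Hperp : dot3 (cross3 q p) p = 0).
  { destruct p as [[? ?] ?], q as [[? ?] ?]. simpl. ring. }
  rewrite (dot3_xi p _ Hz Hperp) in Hstat. unfold distN in Hstat. rewrite dot3_NP in Hstat.
  rewrite Hqp in Hstat.
  replace (dot3 r (scal3 (-1) (cross3 p q))) with (- dot3 r (cross3 p q)) in Hstat
    by (destruct r as [[? ?] ?], (cross3 p q) as [[? ?] ?]; simpl; ring).
  replace (zcoord (scal3 (-1) (cross3 p q))) with (- zcoord (cross3 p q)) in Hstat
    by (destruct (cross3 p q) as [[? ?] ?]; simpl; ring).
  set (z := zcoord p) in *. set (L := zcoord (cross3 p q)) in *.
  set (k := dot3 r (cross3 p q)) in *.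
  set (s := sqrt (1 - z²)) in *. set (u := acos z) in *.
  assert (Hs2 : s * s = 1 - z²) by (apply sqrt_sqrt; unfold Rsqr; nra).
  assert (Hs : 0 < s) by (apply sqrt_lt_R0; unfold Rsqr; nra).
  assert (Hu : 0 < u) by (apply acos_bound_lt; lra).
  assert (Hk : k = - alpha * L / (s * u)) by (rewrite <- (Ropp_involutive k), Hstat; field; lra).
  rewrite Haccel, Hk, <- Hs2. unfold Rsqr in Hunit |- *.
  replace (zcoord q * zcoord q) with (s * s - L * L) by (rewrite Hs2; unfold Rsqr; lra).
  field. lra.
Qed.

Lemma stationary_defect_factor_pos (alpha z : R) :
  alpha <= -1 -> 0 < z < 1 -> 0 < - alpha * sqrt (1 - z²) - z * acos z.
Proof.
  intros Halpha Hz.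
  assert (Hu := acos_bound_lt z ltac:(lra)).
  assert (Hsin : sin (acos z) = sqrt (1 - z²)) by (apply sin_acos; lra).
  assert (Hcos : cos (acos z) = z) by (apply cos_acos; lra).
  pose proof (mul_cos_lt_sin (acos z) Hu) as Hlt. rewrite Hsin, Hcos in Hlt.
  assert (0 <= sqrt (1 - z²)) by apply sqrt_pos.
  nra.
Qed.

(* First and second derivatives of the polar angle [acos z] along a curve with
   position [p], velocity [q] and acceleration [r]. *)
Definition polar_rate (p q : vec3) : R := - zcoord q / sqrt (1 - (zcoord p)²).

Definition polar_accel (p q r : vec3) : R :=
  - (zcoord r * (1 - (zcoord p)²) + zcoord p * (zcoord q)²) / sqrt (1 - (zcoord p)²) ^ 3.

Lemma stationary_polar_concave (alpha : R) (p q r : vec3) :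
  spherical_unit_speed_jet p q r -> alpha <= -1 -> 0 < zcoord p < 1 ->
  dot3 r (cross3 q p) = alpha * dot3 (cross3 q p) (xi p) / distN p ->
  polar_accel p q r <= 0 /\ (polar_rate p q = 0 -> polar_accel p q r < 0).
Proof.
  intros Hjet Halpha Hz Hstat.
  assert (Hdefect := stationary_height_defect alpha p q r Hjet ltac:(lra) Hstat).
  assert (HF := stationary_defect_factor_pos alpha _ Halpha Hz).
  assert (Hs : 0 < sqrt (1 - (zcoord p)²)) by (apply sqrt_lt_R0; unfold Rsqr; nra).
  assert (Hu : 0 < acos (zcoord p)) by (apply acos_bound_lt; lra).
  set (c := (- alpha * sqrt (1 - (zcoord p)²) - zcoord p * acos (zcoord p))
            / (acos (zcoord p) * sqrt (1 - (zcoord p)²) ^ 3)).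
  assert (Hc : 0 < c).
  { apply Rdiv_lt_0_compat; [| apply Rmult_lt_0_compat, pow_lt]; assumption. }
  assert (Haccel : polar_accel p q r = - (zcoord (cross3 p q))² * c).
  { unfold polar_accel, c. rewrite Hdefect. field. lra. }
  rewrite Haccel. split.
  - assert (0 <= (zcoord (cross3 p q))²) by apply Rle_0_sqr. nra.
  - intros Hrate.
    assert (Hq0 : zcoord q = 0).
    { unfold polar_rate in Hrate. apply (Rmult_eq_reg_r (/ sqrt (1 - (zcoord p)²)));
        [unfold Rdiv in Hrate; lra | apply Rinv_neq_0_compat; lra]. }
    pose proof (jet_zcoord_unit p q r Hjet) as Hsq. rewrite Hq0 in Hsq.
    assert (0 < (zcoord (cross3 p q))²) by (unfold Rsqr in *; nra).
    nra.
Qed.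

Lemma distN_concave_on_upper_hemisphere (alpha : R) (g g1 g2 : R -> vec3) :
  complete_unit_speed_spherical_curve g g1 g2 -> alpha <= -1 ->
  alpha_stationary alpha g g1 g2 -> (forall t, zcoord (g t) < 1) ->
  concave_on_sublevel (fun t => distN (g t)) (fun t => polar_rate (g t) (g1 t))
    (fun t => polar_accel (g t) (g1 t) (g2 t)) (PI / 2)
  /\ (forall t, distN (g t) < PI / 2 ->
        polar_rate (g t) (g1 t) = 0 -> polar_accel (g t) (g1 t) (g2 t) < 0).
Proof.
  intros Hcurve Halpha Hst Hbelow.
  assert (Hjet := spherical_unit_speed_jet_curve g g1 g2 Hcurve).
  destruct Hcurve as [Hd [_ Hunit]].
  assert (Hupper : forall t, distN (g t) < PI / 2 -> 0 < zcoord (g t) < 1).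
  { intros t Ht. rewrite distN_acos_zcoord in Ht.
    rewrite (acos_lt_PI2 _ (jet_zcoord_bound _ _ _ (Hjet t))) in Ht.
    split; [exact Ht | apply Hbelow]. }
  assert (Hsign : forall t, distN (g t) < PI / 2 ->
            polar_accel (g t) (g1 t) (g2 t) <= 0
            /\ (polar_rate (g t) (g1 t) = 0 -> polar_accel (g t) (g1 t) (g2 t) < 0)).
  { intros t Ht. specialize (Hupper t Ht).
    apply (stationary_polar_concave alpha); [apply Hjet | exact Halpha | exact Hupper |].
    apply alpha_stationary_unit_speed; [exact Hst | apply Hunit | |];
      intros Hpole; rewrite Hpole in Hupper; simpl in Hupper; lra. }
  split; [| intros t Ht; apply (Hsign t Ht)].
  intros t Ht. destruct (Hd t) as [Hd1 Hd2]. specialize (Hupper t Ht).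
  split; [| split; [| apply (Hsign t Ht)]].
  - apply (is_derive_ext (fun s => acos (zcoord (g s)))).
    { intros s. symmetry. apply distN_acos_zcoord. }
    apply is_derive_acos_comp; [apply is_derive_zcoord, Hd1 | lra].
  - apply (is_derive_acos_rate (fun s => zcoord (g s)) (fun s => zcoord (g1 s)));
      [apply is_derive_zcoord, Hd1 | apply is_derive_zcoord, Hd2 | lra].
Qed.

Theorem theorem3p5 (alpha : R) (g g1 g2 : R -> vec3) :
  alpha <> 0 ->
  complete_unit_speed_spherical_curve g g1 g2 ->
  alpha_stationary alpha g g1 g2 ->
  N_not_adherent g ->
  (exists t, 0 < zcoord (g t)) ->
  alpha > -1.
Proof.
  intros _ Hcurve Hst [eps [Heps Hfar]] [t0 Ht0].
  apply Rnot_le_gt. intros Halpha.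
  assert (Hjet := spherical_unit_speed_jet_curve g g1 g2 Hcurve).
  assert (Hbelow : forall t, zcoord (g t) < 1).
  { intros t. apply (zcoord_lt_1_away_from_NP _ eps); [apply Hjet | exact Heps | apply Hfar]. }
  destruct (distN_concave_on_upper_hemisphere alpha g g1 g2 Hcurve Halpha Hst Hbelow)
    as [Hconc Hstrict].
  assert (Hcont : forall t, continuity_pt (fun s => distN (g s)) t).
  { intros t. destruct Hcurve as [Hd _]. apply (continuity_pt_distN g g1), Hd. }
  assert (Hfar0 := ge_of_concave_on_sublevel _ _ _ (PI / 2) 0 Hcont
                     (fun t => proj1 (acos_bound _)) Hconc Hstrict t0).
  apply Rle_not_lt in Hfar0. apply Hfar0.
  rewrite distN_acos_zcoord, (acos_lt_PI2 _ (jet_zcoord_bound _ _ _ (Hjet t0))).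
  exact Ht0.
Qed.
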